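(* There exist infinitely many distinct rational numbers $r>1$ such that, for each of them, there is a circle $(x-h)^2+y^2=a^2$ with $h,a\in\mathbb{Q}$, $a>0$, carrying four rational points $P_i=(x_i,y_i)$, $i=1,\dots,4$, none of which lies on the $x$-axis, with $x_i>0$ and $x_{i+1}=r\,x_i$ for $i=1,2,3$, and such that $P_1$ and $P_4$ are symmetric with respect to the diameter of the circle parallel to the $y$-axis, i.e. $x_1+x_4=2h$ and $y_1=y_4$.
   Context: Rational points are points with both coordinates in $\mathbb{Q}$. *)

From mathcomp Require Import all_boot all_order all_algebra.
Set Implicit Arguments. Unset Strict Implicit. Unset Printing Implicit Defensive.
Import Order.TTheory GRing.Theory Num.Theory.
Local Open Scope ring_scope.

Definition on_circle (h a x y : rat) : Prop := (x - h) ^+ 2 + y ^+ 2 = a ^+ 2.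

Definition good_ratio (r : rat) : Prop :=
  exists (h a : rat) (x y : 'I_4 -> rat),
    0 < a /\
    (forall i, on_circle h a (x i) (y i)) /\
    (forall i, y i != 0) /\
    (forall i, 0 < x i) /\
    (forall i : 'I_4, (i < 3)%N -> x (inord i.+1) = r * x i) /\
    x ord0 + x (inord 3) = 2 * h /\
    y ord0 = y (inord 3).

From mathcomp Require Import all_boot all_order all_algebra.
From mathcomp Require Import ring lra zify.
Set Implicit Arguments. Unset Strict Implicit. Unset Printing Implicit Defensive.
Import Order.TTheory GRing.Theory Num.Theory.
Local Open Scope ring_scope.

(* With x_i = r^i and centre h = (1 + r^3) / 2, the configuration exists as soon
   as 4r^2 + r + 1 and r^2 + r + 4 are both rational squares.  Parametrizing the
   conic Z^2 = r^2 + r + 4 by t turns this into a rational point on the quartic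
   Y^2 = 4t^4 - 2t^3 - 27t^2 + 4t + 61, which is birational to the elliptic curve
   E : Y^2 = X^3 - 27X^2 - 984X + 26660, and points of E with large X give large r.
   The repeated doublings of the point of E with X = 6121/16 have X >= 31 and X of
   exact 2-adic valuation -2(n+2), so they are pairwise distinct.  Two of them in
   [31, B] are then arbitrarily close, and the chord through them is so steep that
   its third intersection with E has X > B. *)

Section WeierstrassCubic.

Variables (F : fieldType) (a b c : F).

Definition cubic (X : F) : F := X ^+ 3 + a * X ^+ 2 + b * X + c.
Definition dcubic (X : F) : F := 3 * X ^+ 2 + 2 * a * X + b.

(* [e] below, the cubic minus the squared line minus the monic cubic with roots
   X1, X2, X3, has degree at most one and vanishes at X1 and X2. *)
Lemma chord_third_point X1 Y1 X2 Y2 :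
  Y1 ^+ 2 = cubic X1 -> Y2 ^+ 2 = cubic X2 -> X1 != X2 ->
  let l := (Y1 + Y2) / (X1 - X2) in
  exists Y3, Y3 ^+ 2 = cubic (l ^+ 2 - a - X1 - X2).
Proof.
move=> h1 h2 neqX l; set X3 := l ^+ 2 - a - X1 - X2.
exists (Y1 + l * (X3 - X1)).
pose e x := cubic x - (Y1 + l * (x - X1)) ^+ 2 - (x - X1) * (x - X2) * (x - X3).
have e_affine x : e x * (X2 - X1) = e X1 * (X2 - x) + e X2 * (x - X1).
  by rewrite /e /cubic /X3; ring.
have hl : l * (X2 - X1) = - (Y1 + Y2) by rewrite /l; field; rewrite subr_eq0.
have e1 : e X1 = 0 by rewrite /e -h1; ring.
have e2 : e X2 = 0 by rewrite /e -h2 hl; ring.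
have eX3 : e X3 = 0.
  apply: (mulIf (_ : X2 - X1 != 0)); first by rewrite subr_eq0 eq_sym.
  by rewrite e_affine e1 e2 !mul0r addr0.
by move/eqP: eX3; rewrite /e subrr mulr0 subr0 subr_eq0 => /eqP.
Qed.

Lemma tangent_third_point X Y : 2 != 0 :> F -> Y ^+ 2 = cubic X -> Y != 0 ->
  exists Y3, Y3 ^+ 2 = cubic (dcubic X ^+ 2 / (4 * cubic X) - a - 2 * X).
Proof.
move=> two0 hY Y0.
have four0 : 4 != 0 :> F by rewrite [4](_ : _ = 2 * 2 :> F) ?mulf_neq0 //; ring.
have -> : dcubic X ^+ 2 / (4 * cubic X) = (dcubic X / (2 * Y)) ^+ 2.
  by rewrite -hY; field; rewrite Y0 two0 four0.
set l := dcubic X / (2 * Y).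
set X3 := l ^+ 2 - a - 2 * X; exists (Y + l * (X3 - X)).
pose e x := cubic x - (Y + l * (x - X)) ^+ 2 - (x - X) ^+ 2 * (x - X3).
have e_affine x : e x = e X + (x - X) * (dcubic X - 2 * l * Y).
  by rewrite /e /cubic /dcubic /X3; ring.
have hl : dcubic X - 2 * l * Y = 0 by rewrite /l; field; rewrite Y0 two0.
have e1 : e X = 0 by rewrite /e -hY; ring.
have /eqP := e_affine X3; rewrite e1 hl mulr0 addr0 /e subrr mulr0 subr0.
by rewrite subr_eq0 => /eqP.
Qed.

End WeierstrassCubic.

Lemma chord_slope_bound (R : realFieldType) (a b d l g c : R) :
  0 <= a -> 0 <= b -> d != 0 -> l * d = a + b -> a ^+ 2 - b ^+ 2 = d * g ->
  c <= g -> c <= l ^+ 2 * `|d|.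
Proof.
move=> a_ge0 b_ge0 d0 hl hg cg; have d_gt0 : 0 < `|d| by rewrite normr_gt0.
have sq_ab : (a + b) ^+ 2 = l ^+ 2 * `|d| * `|d|.
  by rewrite -hl -mulrA -expr2 real_normK ?num_real // exprMn.
rewrite -(ler_pM2r d_gt0) -sq_ab.
have : `|d| * g <= (a + b) ^+ 2.
  apply: le_trans (_ : `|a ^+ 2 - b ^+ 2| <= _); first by rewrite hg normrM ler_wpM2l ?ler_norm.
  by rewrite ler_norml; apply/andP; split; nra.
by have := ler_wpM2l (ltW d_gt0) cg; rewrite [c * _]mulrC; lra.
Qed.

Lemma close_pair (R : archiRealFieldType) (lo hi e : R) : 0 < e ->
  exists N, forall u : nat -> R, (forall i, (i <= N)%N -> lo <= u i <= hi) ->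
  exists i j, [/\ (i <= N)%N, (j <= N)%N, i != j & `|u i - u j| < e].
Proof.
move=> e_gt0; have [K K_def] : {K : nat | K = Num.truncn ((hi - lo) / e)} by eexists.
exists K.+1 => u u_in; pose x i := (u i - lo) / e.
have x_ge0 i : (i <= K.+1)%N -> 0 <= x i.
  by move=> /u_in /andP [lo_u _]; rewrite divr_ge0 ?subr_ge0 // ltW.
have bucket_le i : (i <= K.+1)%N -> (Num.truncn (x i) <= K)%N.
  by move=> /u_in /andP [_ u_hi]; rewrite K_def le_truncn // ler_pM2r ?invr_gt0 // lerD2r.
pose g (i : 'I_K.+2) : 'I_K.+1 := inord (Num.truncn (x i)).
have /injectivePn [i [j ij gij]] : ~~ injectiveb g.
  by apply/negP => /injectiveP /leq_card; rewrite !card_ord ltnn.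
have [iK jK] : (i <= K.+1)%N /\ (j <= K.+1)%N by split; rewrite -ltnS ltn_ord.
exists i, j; split => //.
have same_bucket : Num.truncn (x i) = Num.truncn (x j).
  by move/(congr1 val): gij; rewrite /= !inordK // ltnS bucket_le.
have /andP [xi_lo xi_hi] := truncn_itv (x_ge0 i iK).
have /andP [xj_lo xj_hi] := truncn_itv (x_ge0 j jK).
rewrite same_bucket in xi_lo xi_hi.
have -> : u i - u j = e * (x i - x j) by rewrite /x; field; rewrite gt_eqF.
rewrite normrM gtr0_norm // -[ltRHS]mulr1 ltr_pM2l // ltr_norml.
by apply/andP; split; lra.
Qed.

Lemma mem_le_sum_norm (R : realDomainType) (s : seq R) x :
  x \in s -> x <= \sum_(y <- s) `|y|.
Proof.
move=> xs; rewrite (big_rem _ xs) /=.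
by apply: ler_wpDr; [apply: sumr_ge0 => y _; apply: normr_ge0 | apply: ler_norm].
Qed.

Definition oddz (p : int) := exists u : int, p = 2 * u + 1.

Lemma oddzM a b : oddz a -> oddz b -> oddz (a * b).
Proof. by move=> [u ->] [v ->]; exists (2 * u * v + u + v); ring. Qed.

Lemma oddzX a (n : nat) : oddz a -> oddz (a ^+ n).
Proof.
move=> oa; elim: n => [|n IH]; first by exists 0; rewrite expr0; ring.
by rewrite exprS; apply: oddzM.
Qed.

Lemma oddzXD a n d : oddz a -> oddz (a ^+ n + 2 * d).
Proof. by move=> oa; have [u ->] := oddzX n oa; exists (u + d); ring. Qed.

Lemma oddz_neq0 a : oddz a -> a != 0.
Proof. by move=> [u ->]; apply/eqP; lia. Qed.

Lemma oddz_mulX4_inj (u v : int) (i j : nat) :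
  oddz u -> oddz v -> u * 4 ^+ i = v * 4 ^+ j -> i = j.
Proof.
wlog lij : u v i j / (i <= j)%N => [hwlog|] ou ov.
  by case: (leqP i j) => [|/ltnW] lij e; [apply: hwlog e | apply/esym/(hwlog v u)].
rewrite -(subnKC lij); case: (j - i)%N => [|k] e; first by rewrite addn0.
have pow0 : 4 ^+ i != 0 :> int by rewrite expf_neq0.
have u_even : u = 2 * (2 * v * 4 ^+ k).
  by apply: (mulIf pow0); rewrite e exprD exprS; ring.
by move: ou; rewrite u_even => -[w]; lia.
Qed.

Definition E_rhs (X : rat) : rat := cubic (-27) (-984) (20 * 1333) X.

(* d^3 E_rhs (p / d) and d^4 dbl_num (p / d), as integers. *)
Definition E_rhs_hom (p d : int) : int :=
  p ^+ 3 - 27 * p ^+ 2 * d - 984 * p * d ^+ 2 + 20 * 1333 * d ^+ 3.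
Definition dbl_num_hom (p d : int) : int :=
  p ^+ 4 + 1968 * p ^+ 2 * d ^+ 2 - 160 * 1333 * p * d ^+ 3 + 144 * 7 * 11 * 347 * d ^+ 4.

Definition dbl_num (X : rat) : rat :=
  X ^+ 4 + 1968 * X ^+ 2 - 160 * 1333 * X + 144 * 7 * 11 * 347.

Definition dbl_x (X : rat) : rat := dbl_num X / (4 * E_rhs X).

Lemma dbl_xE X : E_rhs X != 0 ->
  dcubic (-27) (-984) X ^+ 2 / (4 * E_rhs X) - (-27) - 2 * X = dbl_x X.
Proof.
have numE : dcubic (-27) (-984) X ^+ 2 + 4 * E_rhs X * (27 - 2 * X) = dbl_num X.
  by rewrite /E_rhs /cubic /dcubic /dbl_num; ring.
rewrite /dbl_x -numE; move: (E_rhs X) (dcubic _ _ X) => f g f0; field.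
by rewrite f0.
Qed.

Definition odd_over_pow4 (k : nat) (X : rat) :=
  exists p q : int, [/\ oddz p, oddz q & X = (p%:~R : rat) / (q * 4 ^+ k)%:~R].

Lemma odd_over_pow4_inj i j X : odd_over_pow4 i X -> odd_over_pow4 j X -> i = j.
Proof.
move=> [p [q [op oq ->]]] [p' [q' [op' oq' /eqP]]].
have den0 (r : int) k : oddz r -> (r * 4 ^+ k)%:~R != 0 :> rat.
  by move=> /oddz_neq0 r0; rewrite intr_eq0 mulf_neq0 ?expf_neq0.
rewrite eqr_div ?den0 // -!intrM eqr_int => /eqP e.
by apply/esym/(@oddz_mulX4_inj (p * q') (p' * q)); [exact: oddzM | exact: oddzM | by rewrite -!mulrA].
Qed.

Lemma oddz_E_rhs_hom p z : oddz p -> oddz (E_rhs_hom p (2 * z)).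
Proof.
move=> op; rewrite (_ : E_rhs_hom _ _ = p ^+ 3 + 2 * (z *
  (- 27 * p ^+ 2 - 984 * 2 * p * z + 20 * 1333 * 4 * z ^+ 2))); first exact: oddzXD.
by rewrite /E_rhs_hom; ring.
Qed.

Lemma oddz_dbl_num_hom p z : oddz p -> oddz (dbl_num_hom p (2 * z)).
Proof.
move=> op; rewrite (_ : dbl_num_hom _ _ = p ^+ 4 + 2 * (z * (1968 * 2 * p ^+ 2 * z
  - 160 * 1333 * 4 * p * z ^+ 2 + 144 * 7 * 11 * 347 * 8 * z ^+ 3))); first exact: oddzXD.
by rewrite /dbl_num_hom; ring.
Qed.

Lemma odd_over_pow4_dbl k X : (0 < k)%N -> odd_over_pow4 k X ->
  E_rhs X != 0 /\ odd_over_pow4 k.+1 (dbl_x X).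
Proof.
case: k => [//|k] _ [p [q [op oq ->]]].
have [d dE] : {d | d = q * 4 ^+ k.+1} by exists (q * 4 ^+ k.+1).
rewrite -dE; have d_even : d = 2 * (2 * q * 4 ^+ k) by rewrite dE exprS; ring.
have q0 := oddz_neq0 oq.
have d0 : d%:~R != 0 :> rat by rewrite intr_eq0 d_even !mulf_neq0 ?expf_neq0.
have F0 : (E_rhs_hom p d)%:~R != 0 :> rat.
  by rewrite intr_eq0 d_even; apply/oddz_neq0/oddz_E_rhs_hom.
have E_frac : E_rhs (p%:~R / d%:~R) = (E_rhs_hom p d)%:~R / d%:~R ^+ 3.
  by rewrite /E_rhs /cubic /E_rhs_hom; field.
split; first by rewrite E_frac mulf_neq0 ?invr_neq0 ?expf_neq0.
exists (dbl_num_hom p d), (q * E_rhs_hom p d); rewrite d_even.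
split; [exact: oddz_dbl_num_hom | exact/oddzM/oddz_E_rhs_hom | rewrite -d_even].
have -> : q * E_rhs_hom p d * 4 ^+ k.+2 = 4 * d * E_rhs_hom p d by rewrite dE (exprS _ k.+1); ring.
by rewrite /dbl_x /dbl_num E_frac /dbl_num_hom; field; rewrite d0 F0.
Qed.

Lemma dbl_x_on_curve X Y : Y ^+ 2 = E_rhs X -> Y != 0 ->
  exists Y', Y' ^+ 2 = E_rhs (dbl_x X).
Proof.
move=> hY Y0; have E0 : E_rhs X != 0 by rewrite -hY expf_neq0.
by rewrite -dbl_xE //; exact: tangent_third_point hY Y0.
Qed.

Lemma dbl_x_ge31 X : 0 < E_rhs X -> 31 <= dbl_x X.
Proof.
move=> E_gt0; rewrite -subr_ge0.
have -> : dbl_x X - 31 = ((X - 31) ^+ 2 - 225) ^+ 2 / (4 * E_rhs X).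
  rewrite /dbl_x; have : E_rhs X != 0 by rewrite gt_eqF.
  have numE : dbl_num X = ((X - 31) ^+ 2 - 225) ^+ 2 + 4 * 31 * E_rhs X.
    by rewrite /dbl_num /E_rhs /cubic; ring.
  by rewrite numE; move: (E_rhs X) => f f0; field.
by apply: divr_ge0; [exact: sqr_ge0 | apply: mulr_ge0; [exact: ler0n | exact: ltW]].
Qed.

Definition Xs (n : nat) : rat := iter n dbl_x (6121 / 16).

Lemma odd_over_pow4_Xs n : odd_over_pow4 n.+2 (Xs n).
Proof.
elim: n => [|n IH]; last by have [] := @odd_over_pow4_dbl n.+2 _ isT IH.
by exists 6121, 1; split; [exists 3060; lia | exists 0 | rewrite [Xs 0]/=; field].
Qed.

Lemma Xs_inj : injective Xs.
Proof.
move=> m n e; have := odd_over_pow4_Xs m; rewrite e => /odd_over_pow4_inj.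
by move=> /(_ _ (odd_over_pow4_Xs n)) [].
Qed.

Lemma Xs_on_curve n : (exists Y, Y ^+ 2 = E_rhs (Xs n)) /\ 31 <= Xs n.
Proof.
elim: n => [|n [[Y hY] _]].
  rewrite [Xs 0]/=; split; last by lra.
  by exists (5 ^+ 3 * 9 * 409 / 64); rewrite /E_rhs /cubic; field.
have [E0 _] := @odd_over_pow4_dbl n.+2 _ isT (odd_over_pow4_Xs n).
have Y0 : Y != 0 by apply: contraNneq E0 => Y0; rewrite -hY Y0 expr0n.
split; first exact: dbl_x_on_curve hY Y0.
by apply: dbl_x_ge31; rewrite -hY lt_def sqrf_eq0 Y0 sqr_ge0.
Qed.

Lemma E_secant_ge (X1 X2 : rat) : 31 <= X1 -> 31 <= X2 ->
  225 <= X1 ^+ 2 + X1 * X2 + X2 ^+ 2 - 27 * (X1 + X2) - 984.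
Proof.
move=> h1 h2; have u1 : 0 <= X1 - 31 by rewrite subr_ge0.
have u2 : 0 <= X2 - 31 by rewrite subr_ge0.
by have := mulr_ge0 u1 u2; have := mulr_ge0 u1 u1; have := mulr_ge0 u2 u2; lra.
Qed.

Lemma E_chord_slope X1 Y1 X2 Y2 : 0 <= Y1 -> 0 <= Y2 ->
  Y1 ^+ 2 = E_rhs X1 -> Y2 ^+ 2 = E_rhs X2 -> 31 <= X1 -> 31 <= X2 -> X1 != X2 ->
  225 <= ((Y1 + Y2) / (X1 - X2)) ^+ 2 * `|X1 - X2|.
Proof.
move=> Y1_ge0 Y2_ge0 h1 h2 X1_ge X2_ge X12; rewrite -subr_eq0 in X12.
pose g := X1 ^+ 2 + X1 * X2 + X2 ^+ 2 - 27 * (X1 + X2) - 984.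
have hg : Y1 ^+ 2 - Y2 ^+ 2 = (X1 - X2) * g by rewrite h1 h2 /E_rhs /cubic /g; ring.
exact: (chord_slope_bound Y1_ge0 Y2_ge0 X12 (divfK X12 _) hg (E_secant_ge X1_ge X2_ge)).
Qed.

Lemma curve_points_unbounded (B : rat) : exists X Y, Y ^+ 2 = E_rhs X /\ B < X.
Proof.
pose B1 := `|B| + 31.
have [B_B1 B1_31] : B <= B1 /\ 31 <= B1.
  by have := ler_norm B; have := normr_ge0 B; rewrite /B1; split; lra.
pose e := 225 / (3 * B1); have e_gt0 : 0 < e by rewrite divr_gt0 //; lra.
have [N close] := close_pair 31 B1 e_gt0.
case: (boolP [exists i : 'I_N.+1, B1 < Xs i]) => [/existsP [i Xi_big] | /existsPn small].
  have [[Y hY] _] := Xs_on_curve i.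
  by exists (Xs i), Y; split; last exact: le_lt_trans Xi_big.
have Xs_in i : (i <= N)%N -> 31 <= Xs i <= B1.
  by rewrite -ltnS => iN; have := small (Ordinal iN); rewrite (Xs_on_curve i).2 -leNgt.
have [i [j [iN jN ij Xij_close]]] := close Xs Xs_in.
have /andP [Xi31 XiB1] := Xs_in i iN; have /andP [Xj31 XjB1] := Xs_in j jN.
have Xij : Xs i != Xs j by apply: contra_neq ij; apply: Xs_inj.
have [[Yi hYi] _] := Xs_on_curve i; have [[Yj hYj] _] := Xs_on_curve j.
have hai : `|Yi| ^+ 2 = E_rhs (Xs i) := etrans (real_normK (num_real Yi)) hYi.
have haj : `|Yj| ^+ 2 = E_rhs (Xs j) := etrans (real_normK (num_real Yj)) hYj.
have [Y3 hY3] := chord_third_point hai haj Xij.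
set l := (`|Yi| + `|Yj|) / (Xs i - Xs j) in hY3.
have slope_big : 3 * B1 <= l ^+ 2.
  have l_d := E_chord_slope (normr_ge0 Yi) (normr_ge0 Yj) hai haj Xi31 Xj31 Xij.
  have l_e : 225 <= l ^+ 2 * e.
    exact: le_trans l_d (ler_wpM2l (sqr_ge0 _) (ltW Xij_close)).
  have B1_neq0 : 3 * B1 != 0 by apply: lt0r_neq0; clear -B1_31; lra.
  have B1e : 3 * B1 * e = 225 by rewrite /e mulrC (divfK B1_neq0).
  by rewrite -(ler_pM2r e_gt0) B1e.
exists (l ^+ 2 - (-27) - Xs i - Xs j), Y3; split; first exact: hY3.
by clear -slope_big B_B1 XiB1 XjB1; lra.
Qed.

Lemma good_ratio_of_squares (r W Z : rat) : 1 < r ->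
  W ^+ 2 = 4 * r ^+ 2 + r + 1 -> Z ^+ 2 = r ^+ 2 + r + 4 -> good_ratio r.
Proof.
move=> r_gt1 hW hZ.
have r3_gt1 : 1 < r ^+ 3 by rewrite exprn_egt1.
have r1_neq0 : r - 1 != 0 by rewrite subr_eq0 gt_eqF.
have r3_neq0 : r ^+ 3 - 1 != 0 by rewrite subr_eq0 gt_eqF.
have Z_neq0 : Z != 0.
  by apply: contra_eq_neq hZ => ->; rewrite expr0n eq_sym; apply: lt0r_neq0; nra.
have W_neq0 : W != 0.
  by apply: contra_eq_neq hW => ->; rewrite expr0n eq_sym; apply: lt0r_neq0; nra.
pose y (i : 'I_4) := match nat_of_ord i with
  | 1 => (r - 1) * (2 * r + 1) * Z / 3
  | 2 => (r - 1) * (r + 2) * W / 3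
  | _ => 2 * (r ^+ 3 - 1) / 3 end.
exists ((1 + r ^+ 3) / 2), (5 * (r ^+ 3 - 1) / 6), (fun i => r ^+ i), y.
split; first by rewrite !divr_gt0 // mulr_gt0 // subr_gt0.
split.
  case=> [[|[|[|[|//]]]] i4]; rewrite /on_circle /y /=.
  - by rewrite expr0; field.
  - by rewrite expr1 !exprMn hZ; field.
  - by rewrite !exprMn hW; field.
  - by field.
split.
  case=> [[|[|[|[|//]]]] i4]; rewrite /y /= !mulf_neq0 ?invr_neq0 //;
    apply: lt0r_neq0; lra.
split; first by move=> i; apply: exprn_gt0; lra.
split; first by case=> [[|[|[|//]]] i4] _; rewrite inordK // exprS.
by rewrite inordK //; split; [field | rewrite /y inordK].
Qed.

Definition quartic_rhs (t : rat) : rat :=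
  4 * t ^+ 4 - 2 * t ^+ 3 - 27 * t ^+ 2 + 4 * t + 61.

Definition t_of_point (X Y : rat) : rat := (2 * Y - X + 16) / (2 * (109 - 4 * X)).

(* (109 - 4X) times the difference of the two sides is a square in t minus
   E_rhs X / 4, and t_of_point makes that square equal to Y^2 / 4. *)
Lemma E_to_quartic X Y : Y ^+ 2 = E_rhs X -> 4 * X != 109 ->
  let t := t_of_point X Y in (2 * t ^+ 2 - t / 2 - X / 4) ^+ 2 = quartic_rhs t.
Proof.
move=> hY hX t; have A0 : 109 - 4 * X != 0 by rewrite subr_eq0 eq_sym.
have At : (109 - 4 * X) * t = (2 * Y - X + 16) / 2 by rewrite /t /t_of_point; field.
have key : (109 - 4 * X) * ((2 * t ^+ 2 - t / 2 - X / 4) ^+ 2 - quartic_rhs t) =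
    ((109 - 4 * X) * t / 2 - (4 - X / 4)) ^+ 2 - E_rhs X / 4.
  by rewrite /quartic_rhs /E_rhs /cubic; field.
apply: (mulfI A0); apply/eqP; rewrite -subr_eq0 -mulrBr key.
rewrite (_ : (109 - 4 * X) * t / 2 - (4 - X / 4) = Y / 2); last by rewrite At; field.
by rewrite -hY; apply/eqP; field.
Qed.

(* ((t^2 - 4) / (1 - 2t), (t^2 - t + 4) / (2t - 1)) parametrizes the conic
   Z^2 = r^2 + r + 4, and along it 4r^2 + r + 1 = quartic_rhs t / (1 - 2t)^2. *)
Definition ratio_of_t (t : rat) : rat := (t ^+ 2 - 4) / (1 - 2 * t).

Lemma quartic_point_good_ratio (t Yq : rat) : t <= -6 -> Yq ^+ 2 = quartic_rhs t ->
  - t / 2 - 1 <= ratio_of_t t /\ good_ratio (ratio_of_t t).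
Proof.
move=> t_le hq; have d_gt0 : 0 < 1 - 2 * t by clear hq; lra.
have d_neq0 := lt0r_neq0 d_gt0.
have r_ge : - t / 2 - 1 <= ratio_of_t t.
  rewrite /ratio_of_t ler_pdivlMr //.
  have -> : (- t / 2 - 1) * (1 - 2 * t) = t ^+ 2 - 4 - (- 3 - 3 * t / 2) by field.
  by clear hq; lra.
split; first exact: r_ge.
apply: (@good_ratio_of_squares _ (Yq / (1 - 2 * t))
    ((t ^+ 2 - t + 4) / (2 * t - 1))).
- by clear hq; lra.
- by rewrite expr_div_n hq /ratio_of_t /quartic_rhs; field.
- rewrite /ratio_of_t; field; rewrite d_neq0 /=; apply: ltr0_neq0; clear hq; lra.
Qed.

Lemma t_of_point_le (X Y T : rat) : 0 <= T -> 0 <= Y -> Y ^+ 2 = E_rhs X ->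
  1011 + (1 + 8 * T) ^+ 2 < X -> t_of_point X Y <= - T.
Proof.
move=> T_ge0 Y_ge0 hY X_big.
have c2_ge0 := sqr_ge0 (1 + 8 * T).
have X_gt1 : 1 < X by clear hY; lra.
have E_lb : X ^+ 2 * (X - 1011) <= E_rhs X.
  have : 0 <= X * (X - 1) by apply: mulr_ge0; lra.
  by rewrite /E_rhs /cubic; clear -X_gt1; lra.
have cX_ge0 : 0 <= (1 + 8 * T) * X by apply: mulr_ge0; lra.
have Y2_ge0 : 0 <= 2 * Y by lra.
have sq_lt : ((1 + 8 * T) * X) ^+ 2 < (2 * Y) ^+ 2.
  have -> : (2 * Y) ^+ 2 = 4 * E_rhs X by rewrite -hY; ring.
  have -> : ((1 + 8 * T) * X) ^+ 2 = (1 + 8 * T) ^+ 2 * X ^+ 2 by ring.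
  have : (1 + 8 * T) ^+ 2 * X ^+ 2 < X ^+ 2 * (X - 1011).
    by rewrite mulrC ltr_pM2l ?exprn_gt0; clear -X_big X_gt1; lra.
  by have := mulr_ge0 c2_ge0 (sqr_ge0 X); clear -E_lb; lra.
have cX_lt : (1 + 8 * T) * X < 2 * Y by rewrite -(ltr_sqr cX_ge0 Y2_ge0).
rewrite /t_of_point ler_ndivrMr; last by clear -X_big c2_ge0; lra.
by clear -cX_lt T_ge0; lra.
Qed.

Lemma good_ratios_unbounded (M : rat) : exists r, M < r /\ good_ratio r.
Proof.
pose T := 2 * `|M| + 6; have M_le := ler_norm M.
have T_ge6 : 6 <= T by have := normr_ge0 M; rewrite /T; lra.
have [X [Y [hY X_big]]] := curve_points_unbounded (1011 + (1 + 8 * T) ^+ 2).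
have hY' : `|Y| ^+ 2 = E_rhs X := etrans (real_normK (num_real Y)) hY.
have X_neq : 4 * X != 109.
  by apply/negbT/gt_eqF; have := sqr_ge0 (1 + 8 * T); clear hY hY'; lra.
have t_le := t_of_point_le (le_trans (ler0n _ 6) T_ge6) (normr_ge0 Y) hY' X_big.
have t_le6 : t_of_point X `|Y| <= -6 by clear hY hY'; lra.
have [r_ge r_good] := quartic_point_good_ratio t_le6 (E_to_quartic hY' X_neq).
exists (ratio_of_t (t_of_point X `|Y|)); split; last exact: r_good.
by move: r_ge t_le; rewrite /T; clear -M_le; lra.
Qed.

Theorem mainTheorem4 :
  forall s : seq rat, exists r : rat, r \notin s /\ 1 < r /\ good_ratio r.
Proof.
move=> s; pose M := 1 + \sum_(y <- s) `|y|.
have [r [M_lt_r r_good]] := good_ratios_unbounded M.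
have sum_ge0 : 0 <= \sum_(y <- s) `|y| by apply: sumr_ge0 => y _; apply: normr_ge0.
rewrite /M in M_lt_r; exists r; split; last by split; [lra | exact: r_good].
by apply/negP => /mem_le_sum_norm; lra.
Qed.
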